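(* Let $f\in\mathcal{R}$ be a real rational function all of whose poles are roots of unity, and let $L$ be the level of $f$. Then $f$ is a finite real linear combination of the functions \[\Big(x\frac{d}{dx}\Big)^k\Big(\frac{x^j}{1-x^L}\Big),\qquad k\in\mathbb{N}=\{0,1,2,\dots\},\ 0\le j<L,\] and each of these functions is an eigenfunction of $U_{L+1}$ and has level $L$.
   Context: $\mathcal{R}$ denotes the real vector space of rational functions $f(x)=A(x)/B(x)$ with $A,B\in\mathbb{R}[x]$, $B(0)\neq 0$ and $\deg A<\deg B$. For a rational function $f$ with Taylor expansion $f(x)=\sum_{n\ge0}a_nx^n$ at $0$ and a positive integer $p$, $U_pf(x)=\sum_{n\ge 0}a_{pn}x^n$. If all poles of $f$ are roots of unity, the level of $f$ is the least common multiple of the orders of these roots of unity. *)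

From HB Require Import structures.
From mathcomp Require Import all_boot all_order all_algebra.
From mathcomp Require Import complex.
Set Implicit Arguments. Unset Strict Implicit. Unset Printing Implicit Defensive.
Import Order.TTheory GRing.Theory Num.Theory.
Local Open Scope ring_scope.

(* A rational function A/B is represented by the pair of polynomials (A, B).
   The ambient field of real numbers is an arbitrary real closed field R,
   and its complex numbers are R[i]. *)

Section RatFun.
Variable R : rcfType.

Definition ratf (A B : {poly R}) : {fraction {poly R}} :=
  FracField.tofrac A / FracField.tofrac B.

Definition ratc (c : R) : {fraction {poly R}} := FracField.tofrac c%:P.

(* Taylor coefficients at 0 of A/B (B(0) <> 0): the unique sequence (a_n)
   with  sum_{i<=n} B_i a_{n-i} = A_n  for all n (formal power series
   quotient A/B).  tcoefs A B n lists a_0, ..., a_n. *)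
Fixpoint tcoefs (A B : {poly R}) (n : nat) : seq R :=
  match n with
  | 0 => [:: A`_0 / B`_0]
  | n'.+1 => let s := tcoefs A B n' in
      rcons s ((A`_n - \sum_(1 <= i < n.+1) B`_i * nth 0 s (n - i)) / B`_0)
  end.

Definition taylor (A B : {poly R}) (n : nat) : R := nth 0 (tcoefs A B n) n.

(* A/B is an eigenfunction of U_p: U_p(A/B) = lam * (A/B) with A/B <> 0,
   U_p acting on Taylor coefficients by a_n |-> a_{pn}. *)
Definition Up_eigenfunction (p : nat) (A B : {poly R}) : Prop :=
  ratf A B != 0 /\
  exists lam : R, forall n : nat, taylor A B (p * n) = lam * taylor A B n.

Definition cpoly (P : {poly R}) : {poly R[i]} := map_poly (fun x => x%:C)%C P.

Definition is_pole (A B : {poly R}) (z : R[i]) : Prop :=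
  root (cpoly (B %/ gcdp A B)) z.

(* L is the level of A/B: all poles are roots of unity, and L is the least
   common multiple of their orders (stated by the universal property of the
   lcm; the order of z is the n with n.-primitive_root z). *)
Definition is_level (A B : {poly R}) (L : nat) : Prop :=
  (forall z, is_pole A B z -> exists n, n.-primitive_root z /\ (n %| L)%N) /\
  (forall m : nat,
     (forall z, is_pole A B z -> exists n, n.-primitive_root z /\ (n %| m)%N) ->
     (L %| m)%N).

(* theta = x d/dx on rational functions:
   theta (A/B) = x (A' B - A B') / B^2. *)
Definition theta (AB : {poly R} * {poly R}) : {poly R} * {poly R} :=
  ('X * (AB.1^`() * AB.2 - AB.1 * AB.2^`()), AB.2 ^+ 2).

Definition gfun (L k j : nat) : {poly R} * {poly R} :=
  iter k theta ('X^j, 1 - 'X^L).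

End RatFun.

From HB Require Import structures.
From mathcomp Require Import all_boot all_order all_algebra.
From mathcomp Require Import complex.
From mathcomp Require Import ring zify.
From mathcomp Require cyclic separable cyclotomic.
Set Implicit Arguments. Unset Strict Implicit. Unset Printing Implicit Defensive.
Import Order.TTheory GRing.Theory Num.Theory.
Local Open Scope ring_scope.

(* Let D = 1 - x^L.  Every pole is an L-th root of unity, so the reduced
   denominator of f divides D^K for some K and f = N / D^K with deg N < K L.
   By induction on k, (x d/dx)^k (x^j / D) = gnum_(k,j) / D^(k+1) where
   deg gnum_(k,j) <= (k+1) L and gnum_(k,j) = k! L^k x^j modulo D.  Hence
   the gnum_(K-1,j), j < L, span the polynomials of degree <= K L modulo
   D, and induction on K writes N / D^K in the required form.  The Taylor
   coefficients of (x d/dx)^k (x^j / D) are n^k [n = j mod L], which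
   U_(L+1) multiplies by (L+1)^k.  Finally gnum_(k,j) does not vanish at
   the L-th roots of unity, so all of them are poles and the level is L. *)

Section TaylorSeries.
Variable R : rcfType.
Implicit Types (A B P : {poly R}) (a b : nat -> R).

Definition is_taylor A B a := forall n, A`_n = \sum_(i < n.+1) B`_i * a (n - i)%N.

Definition trunc n a : {poly R} := \poly_(i < n.+1) a i.

Lemma size_tcoefs A B n : size (tcoefs A B n) = n.+1.
Proof. by elim: n => //= n IH; rewrite size_rcons IH. Qed.

Lemma nth_tcoefs A B n i : (i <= n)%N -> nth 0 (tcoefs A B n) i = taylor A B i.
Proof.
elim: n => [|n IH]; first by rewrite leqn0 => /eqP ->.
rewrite leq_eqVlt => /orP [/eqP -> //| lt_in].
by rewrite /= nth_rcons size_tcoefs lt_in IH.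
Qed.

Lemma taylor_is_taylor A B : B`_0 != 0 -> is_taylor A B (taylor A B).
Proof.
move=> B0 [|n]; first by rewrite big_ord1 /taylor /= mulrC divfK.
rewrite big_ord_recl subn0 {1}/taylor /= nth_rcons size_tcoefs ltnn eqxx.
rewrite big_add1 big_mkord /= mulrC divfK //.
rewrite [X in _ - X](eq_bigr (fun i : 'I_n.+1 => B`_(bump 0 i) * taylor A B (n - i))).
  by rewrite subrK.
by move=> i _; rewrite subSS nth_tcoefs ?leq_subr.
Qed.

Lemma is_taylor_uniq A B a b : B`_0 != 0 ->
  is_taylor A B a -> is_taylor A B b -> a =1 b.
Proof.
move=> B0 Ha Hb n; elim/ltn_ind: n => n IH.
have := Ha n; rewrite Hb !big_ord_recl !subn0.
have -> : \sum_(i < n) B`_(lift ord0 i) * a (n - lift ord0 i)%N =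
          \sum_(i < n) B`_(lift ord0 i) * b (n - lift ord0 i)%N.
  by apply: eq_bigr => i _; rewrite IH // ltn_subrL (leq_ltn_trans _ (ltn_ord i)).
by move/addIr/(mulfI B0).
Qed.

Lemma taylorE A B a : B`_0 != 0 -> is_taylor A B a -> taylor A B =1 a.
Proof. by move=> B0; apply: is_taylor_uniq (taylor_is_taylor A B0). Qed.

Lemma dvdXnP n P : reflect (forall i, (i < n)%N -> P`_i = 0) ('X^n %| P).
Proof.
apply: (iffP idP) => [/dvdpP [Q ->] i lt_in | P_low]; first by rewrite coefMXn lt_in.
have take0 : take_poly n P = 0.
  by apply/polyP => i; rewrite coef_take_poly coef0; case: ifP => // /P_low.
by rewrite -(poly_take_drop n P) take0 add0r dvdp_mull.
Qed.

Lemma coefM_trunc B n a i : (i <= n)%N ->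
  (B * trunc n a)`_i = \sum_(j < i.+1) B`_j * a (i - j)%N.
Proof.
move=> le_in; rewrite coefM; apply: eq_bigr => j _.
by rewrite coef_poly ltnS (leq_trans (leq_subr _ _) le_in).
Qed.

Lemma is_taylor_dvdXn A B a :
  is_taylor A B a <-> forall n, 'X^(n.+1) %| B * trunc n a - A.
Proof.
split=> [Ha n | Hdvd n].
  by apply/dvdXnP => i le_in; rewrite coefB coefM_trunc // -Ha subrr.
have /dvdXnP/(_ n (ltnSn n)) := Hdvd n.
by rewrite coefB coefM_trunc // => /eqP; rewrite subr_eq0 => /eqP.
Qed.

Lemma dvdXn_Xderiv n P : 'X^n %| P -> 'X^n %| 'X * P^`().
Proof.
case/dvdpP=> Q ->; rewrite derivM mulrDr dvdp_add //; first by rewrite mulrA dvdp_mull.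
case: n => [|n]; first by rewrite dvd1p.
apply/dvdpP; exists (Q * n.+1%:R); rewrite derivXn /= -mulr_natr exprS; ring.
Qed.

Lemma Xderiv_trunc n a : 'X * (trunc n a)^`() = trunc n (fun i => i%:R * a i).
Proof.
apply/polyP => -[|i]; rewrite coefXM ?coef_deriv !coef_poly.
  by rewrite mulr0n mul0r; case: ifP.
by rewrite /= mulr_natl; case: ifP => // _; rewrite mul0rn.
Qed.

Lemma is_taylor_theta A B a : is_taylor A B a ->
  is_taylor (theta (A, B)).1 (theta (A, B)).2 (fun n => n%:R * a n).
Proof.
move/is_taylor_dvdXn => Ha; apply/is_taylor_dvdXn => n /=.
(* Both terms on the right vanish to order n + 1 because B T = A does. *)
have -> : B ^+ 2 * trunc n (fun i => i%:R * a i) - 'X * (A^`() * B - A * B^`()) =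
  B * ('X * (B * trunc n a - A)^`()) - ('X * B^`()) * (B * trunc n a - A).
  by rewrite -Xderiv_trunc derivB derivM; ring.
by rewrite dvdp_sub // dvdp_mull // dvdXn_Xderiv.
Qed.

End TaylorSeries.

Section RationalFunctions.
Variable R : rcfType.
Implicit Types (P Q : {poly R}) (c : R).

Lemma ratf_neq0 P Q : P != 0 -> Q != 0 -> ratf P Q != 0.
Proof. by move=> P0 Q0; rewrite mulf_neq0 ?invr_eq0 ?tofrac_eq0. Qed.

Lemma ratf_cross P Q P2 Q2 : Q != 0 -> Q2 != 0 -> P * Q2 = P2 * Q ->
  ratf P Q = ratf P2 Q2.
Proof.
by move=> Q0 Q20 eq_cross; apply/eqP; rewrite eqr_div ?tofrac_eq0 // -!tofracM eq_cross.
Qed.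

Lemma ratfZ c P Q : ratf (c *: P) Q = ratc c * ratf P Q.
Proof. by rewrite /ratf /ratc -mul_polyC tofracM mulrA. Qed.

Lemma ratf_suml I (r : seq I) (F : I -> {poly R}) Q :
  ratf (\sum_(i <- r) F i) Q = \sum_(i <- r) ratf (F i) Q.
Proof. by rewrite /ratf rmorph_sum mulr_suml. Qed.

Lemma ratfD P1 P2 Q : ratf (P1 + P2) Q = ratf P1 Q + ratf P2 Q.
Proof. by rewrite /ratf rmorphD mulrDl. Qed.

Lemma ratf_mul2r P Q M : M != 0 -> ratf (P * M) (Q * M) = ratf P Q.
Proof.
by move=> M0; rewrite /ratf !tofracM invfM mulrACA divff ?mulr1 ?tofrac_eq0.
Qed.

End RationalFunctions.

Definition onemXn (R : rcfType) (L : nat) : {poly R} := 1 - 'X^L.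
Arguments onemXn {R} L.

Section GeneratingFunctions.
Variables (R : rcfType) (L j : nat).
Hypotheses (L_gt0 : (0 < L)%N) (j_lt_L : (j < L)%N).
Local Notation G k := (gfun R L k j).
Local Notation D := (onemXn L : {poly R}).

Lemma gfunS k : G k.+1 = theta (G k).
Proof. exact: iterS. Qed.

Lemma gfun_den k : (G k).2 = D ^+ (2 ^ k).
Proof. by elim: k => [|k IH]; rewrite ?expr1 // gfunS /= IH -exprM expnSr. Qed.

Lemma onemXn_coef0 : D`_0 = 1.
Proof. by rewrite coefB coef1 coefXn -(prednK L_gt0) subr0. Qed.

Lemma onemXn_neq0 : D != 0.
Proof. by apply: contra_neq (@oner_neq0 R) => D0; rewrite -onemXn_coef0 D0 coef0. Qed.

Lemma gfun_den_coef0 k : (G k).2`_0 = 1.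
Proof. by rewrite gfun_den -horner_coef0 horner_exp horner_coef0 onemXn_coef0 expr1n. Qed.

Lemma gfun_den_neq0 k : (G k).2 != 0.
Proof. by rewrite gfun_den expf_neq0 // onemXn_neq0. Qed.

Lemma is_taylor_gfun0 : is_taylor 'X^j D (fun n => ((n %% L)%N == j)%:R).
Proof.
move=> n; rewrite -(coefM_trunc _ (fun n => ((n %% L)%N == j)%:R) (leqnn n)).
rewrite mulrBl mul1r coefB coefXnM coefXn coef_poly ltnSn.
case: ltnP => [lt_nL | le_Ln]; first by rewrite subr0 modn_small.
have -> : (n %% L = (n - L) %% L)%N by rewrite -{1}(subnK le_Ln) modnDr.
by rewrite coef_poly ltnS leq_subr subrr (gtn_eqF (leq_trans j_lt_L le_Ln)).
Qed.

Lemma is_taylor_gfun k :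
  is_taylor (G k).1 (G k).2 (fun n => n%:R ^+ k * ((n %% L)%N == j)%:R).
Proof.
elim: k => [|k IH].
  by move=> n; rewrite is_taylor_gfun0; apply: eq_bigr => i _; rewrite mul1r.
move: (is_taylor_theta IH); rewrite -surjective_pairing -gfunS => Hk n.
by rewrite Hk; apply: eq_bigr => i _; rewrite exprS mulrA.
Qed.

Lemma taylor_gfun k n : taylor (G k).1 (G k).2 n = n%:R ^+ k * ((n %% L)%N == j)%:R.
Proof. by rewrite (taylorE _ (is_taylor_gfun k)) // gfun_den_coef0 oner_neq0. Qed.

Lemma gfun_num_neq0 k : (G k).1 != 0.
Proof.
apply/eqP => G0; have taylor0 : taylor (G k).1 (G k).2 =1 (fun _ => 0).
  apply: taylorE; first by rewrite gfun_den_coef0 oner_neq0.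
  by move=> n; rewrite G0 coef0 big1 // => i _; rewrite mulr0.
have := taylor_gfun k (j + L); rewrite taylor0 modnDr modn_small // eqxx mulr1.
by move/esym/eqP; rewrite expf_eq0 pnatr_eq0 addn_eq0 (negbTE (lt0n_neq0 L_gt0)) !andbF.
Qed.

Lemma gfun_Up_eigenfunction k : Up_eigenfunction L.+1 (G k).1 (G k).2.
Proof.
split; first by rewrite ratf_neq0 ?gfun_num_neq0 ?gfun_den_neq0.
exists (L.+1%:R ^+ k) => n; rewrite !taylor_gfun natrM exprMn -mulrA.
by rewrite mulSn addnC mulnC modnMDl.
Qed.

End GeneratingFunctions.

Lemma theta_cross (R : rcfType) (P Q P2 Q2 : {poly R}) : P * Q2 = P2 * Q ->
  (theta (P, Q)).1 * Q2 ^+ 2 = (theta (P2, Q2)).1 * Q ^+ 2.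
Proof.
move=> eq_cross; have /(congr1 deriv) := eq_cross; rewrite !derivM /= => eq_deriv.
apply/eqP; rewrite -subr_eq0; apply/eqP.
transitivity ('X * (Q * Q2 * ((P^`() * Q2 + P * Q2^`()) - (P2^`() * Q + P2 * Q^`()))
             - (Q^`() * Q2 + Q * Q2^`()) * (P * Q2 - P2 * Q))); first by ring.
by rewrite eq_deriv eq_cross !subrr !mulr0 subrr mulr0.
Qed.

(* theta (P / D^(k+1)) = x (P' D - (k+1) P D') / D^(k+2), with D' = -L x^(L-1). *)
Fixpoint gnum (R : rcfType) (L j k : nat) : {poly R} :=
  if k is k'.+1 then
    'X * ((gnum R L j k')^`() * onemXn L + (gnum R L j k' * 'X^(L.-1)) *+ (k'.+1 * L))
  else 'X^j.
Arguments gnum {R}.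

Section Numerators.
Variables (R : rcfType) (L j : nat).
Hypotheses (L_gt0 : (0 < L)%N) (j_lt_L : (j < L)%N).
Local Notation G k := (gfun R L k j).
Local Notation D := (onemXn L : {poly R}).
Local Notation N k := (gnum L j k : {poly R}).

Lemma X_mul_XnL1 : 'X * 'X^(L.-1) = 1 - D :> {poly R}.
Proof. by rewrite -exprS prednK // /onemXn opprB addrC subrK. Qed.

Lemma deriv_onemXn : D^`() = - ('X^(L.-1) *+ L).
Proof. by rewrite /onemXn derivB derivXn -derivn1 derivnC /= sub0r. Qed.

Lemma size_onemXn : size D = L.+1.
Proof. by rewrite /onemXn -opprB size_polyN size_XnsubC. Qed.

Lemma size_onemXn_exp K : size (D ^+ K) = (K * L).+1.
Proof.
rewrite -[LHS]prednK ?size_poly_gt0 ?expf_neq0 ?onemXn_neq0 //.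
by rewrite size_exp size_onemXn mulnC.
Qed.

Lemma theta_gnum k :
  (theta (N k, D ^+ k.+1)).1 * D ^+ k.+2 = N k.+1 * (D ^+ k.+1) ^+ 2.
Proof. by rewrite /= deriv_exp deriv_onemXn !exprS -!mulrnAl; ring. Qed.

Lemma gfun_cross k : (G k).1 * D ^+ k.+1 = N k * (G k).2.
Proof.
elim: k => [|k IH]; first by rewrite /= !expr1.
have Dk_neq0 : (D ^+ k.+1) ^+ 2 != 0 by rewrite !expf_neq0 // onemXn_neq0.
apply: (mulIf Dk_neq0); rewrite gfunS.
have := theta_cross IH; rewrite -surjective_pairing => theta_IH.
rewrite [LHS]mulrAC theta_IH [LHS]mulrAC theta_gnum.
by rewrite [(theta _).2]/= mulrAC.
Qed.

Lemma size_gnum k : (size (N k) <= k.+1 * L)%N.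
Proof.
elim: k => [|k IH] /=; first by rewrite size_polyXn mul1n.
set P := N k in IH *; set U := P^`() * D; set V := (P * 'X^(L.-1)) *+ (k.+1 * L).
have size_U : (size U <= (size P).-1 + L)%N.
  apply: leq_trans (size_polyMleq _ _) _; rewrite size_onemXn addnS /=.
  by rewrite leq_add2r size_poly.
have size_V : (size V <= (size P + L).-1)%N.
  rewrite /V -scaler_nat (leq_trans (size_scale_leq _ _)) //.
  by rewrite (leq_trans (size_polyMleq _ _)) // size_polyXn prednK.
have size_UV := size_polyD U V.
apply: leq_trans (size_polyMleq _ _) _; rewrite size_polyX -[2%R]/2%N mulSn.
by move: (size P) (size U) (size V) (size (U + V)) IH size_U size_V size_UV => *; lia.
Qed.

Lemma gnum_mod k : D %| N k - (k`! * L ^ k)%:R * 'X^j.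
Proof.
elim: k => [|k IH] /=; first by rewrite mul1r subrr dvdp0.
set P := N k in IH *; set m := (k.+1 * L)%N.
have -> : 'X * (P^`() * D + (P * 'X^(L.-1)) *+ m) - (k.+1`! * L ^ k.+1)%:R * 'X^j
    = (P - (k`! * L ^ k)%:R * 'X^j) * m%:R + D * ('X * P^`() - P *+ m).
  have -> : (k.+1`! * L ^ k.+1 = k`! * L ^ k * m)%N by rewrite factS expnS /m; ring.
  have XP : 'X * (P * 'X^(L.-1)) = P * (1 - D) by rewrite mulrCA X_mul_XnL1.
  by rewrite mulrDr mulrnAr XP natrM; ring.
by rewrite dvdp_add ?dvdp_mulr ?dvdp_mulIl.
Qed.

End Numerators.

Lemma prim_root_exists (F : closedFieldType) n :
  (0 < n)%N -> n%:R != 0 :> F -> exists z : F, n.-primitive_root z.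
Proof.
move=> n_gt0 n_neq0; have [r Dp] := closed_field_poly_normal ('X^n - 1 : {poly F}).
rewrite (monicP _) ?monicXnsubC // scale1r in Dp.
have rn1 : all n.-unity_root r by apply/allP => z; rewrite -root_prod_XsubC -Dp.
have sz_r : (n < (size r).+1)%N by rewrite -(size_prod_XsubC r id) -Dp size_XnsubC.
have [|z] := hasP (cyclic.has_prim_root n_gt0 rn1 _ sz_r); last by exists z.
by rewrite -separable.separable_prod_XsubC -Dp cyclotomic.separable_Xn_sub_1.
Qed.

Section Poles.
Variable R : rcfType.
Implicit Types (A B P Q : {poly R}) (z : R[i]).

Lemma cpoly_eq0 P : (cpoly P == 0) = (P == 0).
Proof. exact: map_poly_eq0. Qed.

Lemma cpolyM P Q : cpoly (P * Q) = cpoly P * cpoly Q.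
Proof. exact: rmorphM. Qed.

Lemma cpolyD P Q : cpoly (P + Q) = cpoly P + cpoly Q.
Proof. exact: rmorphD. Qed.

Lemma cpolyXn P n : cpoly (P ^+ n) = cpoly P ^+ n.
Proof. exact: rmorphXn. Qed.

Lemma cpoly_natXn n j : cpoly (n%:R * 'X^j : {poly R}) = n%:R * 'X^j.
Proof. by rewrite /cpoly rmorphM rmorph_nat /= map_polyXn. Qed.

Lemma cpoly_onemXn L : cpoly (onemXn L) = 1 - 'X^L :> {poly R[i]}.
Proof. by rewrite /cpoly /onemXn rmorphB rmorph1 /= map_polyXn. Qed.

Lemma is_pole_root_den A B z : is_pole A B z -> root (cpoly B) z.
Proof. by apply: root_dvdp; rewrite dvdp_map divp_dvd // dvdp_gcdr. Qed.

Lemma is_pole_cross A B P Q z : B != 0 -> A * Q = P * B ->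
  root (cpoly Q) z -> ~~ root (cpoly P) z -> is_pole A B z.
Proof.
move=> B_neq0 eq_cross Qz Pz; set g := gcdp A B.
have g_neq0 : g != 0 by rewrite gcdp_eq0 negb_and B_neq0 orbT.
have red_cross : A %/ g * Q = P * (B %/ g).
  by apply: (mulIf g_neq0); rewrite mulrAC -[RHS]mulrA !divpK ?dvdp_gcdl ?dvdp_gcdr.
have /(congr1 (fun p => p.[z])) := congr1 (@cpoly R) red_cross.
rewrite !cpolyM !hornerM (rootP Qz) mulr0 => /esym/eqP.
by rewrite mulf_eq0 -rootE (negbTE Pz).
Qed.

Lemma is_level_roots_of_unity A B L : (0 < L)%N ->
  (forall z, is_pole A B z -> z ^+ L = 1) ->
  (forall z, L.-primitive_root z -> is_pole A B z) -> is_level A B L.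
Proof.
move=> L_gt0 poles_unity prim_poles; split=> [z /poles_unity zL | m poles_m].
  by have [n prim_n dvd_nL] := prim_order_exists L_gt0 zL; exists n.
have [z prim_z] : exists z : R[i], L.-primitive_root z.
  by apply: prim_root_exists; rewrite ?pnatr_eq0 -?lt0n.
have [n [prim_n dvd_nm]] := poles_m z (prim_poles z prim_z).
by rewrite (prim_order_dvd prim_z) -(prim_order_dvd prim_n).
Qed.

End Poles.

Section GeneratingFunctionLevel.
Variables (R : rcfType) (L j : nat).
Hypothesis L_gt0 : (0 < L)%N.
Local Notation G k := (gfun R L k j).

Lemma gfun_pole k (z : R[i]) : z ^+ L = 1 -> is_pole (G k).1 (G k).2 z.
Proof.
move=> zL; apply: (is_pole_cross (gfun_den_neq0 R j L_gt0 k) (gfun_cross R j L_gt0 k)).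
  by rewrite rootE cpolyXn cpoly_onemXn !hornerE zL subrr expr0n.
have /dvdpP [Q /eqP] := gnum_mod R j L_gt0 k; rewrite subr_eq => /eqP ->.
rewrite rootE cpolyD cpoly_natXn cpolyM cpoly_onemXn !hornerE zL subrr mulr0 add0r.
have z_neq0 : z != 0.
  by apply: contra_eq_neq zL => ->; rewrite expr0n gtn_eqF // eq_sym oner_eq0.
rewrite -polyC_natr hornerC mulf_neq0 ?expf_neq0 //.
by rewrite pnatr_eq0 -lt0n muln_gt0 fact_gt0 expn_gt0 L_gt0.
Qed.

Lemma gfun_level k : is_level (G k).1 (G k).2 L.
Proof.
apply: is_level_roots_of_unity => // [z /is_pole_root_den | z /prim_expr_order].
  rewrite gfun_den cpolyXn cpoly_onemXn rootE !hornerE.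
  by rewrite expf_eq0 subr_eq0 => /andP [_ /eqP/esym].
exact: gfun_pole.
Qed.

End GeneratingFunctionLevel.

Section Span.
Variables (R : rcfType) (L : nat).
Hypothesis L_gt0 : (0 < L)%N.
Local Notation D := (onemXn L : {poly R}).
Local Notation G k j := (gfun R L k j).

Lemma ratf_gfun k j : ratf (G k j).1 (G k j).2 = ratf (gnum L j k) (D ^+ k.+1).
Proof.
apply: ratf_cross (gfun_cross R j L_gt0 k); first exact: gfun_den_neq0.
by rewrite expf_neq0 // onemXn_neq0.
Qed.

Lemma gnum_reduction K (N : {poly R}) : (size N <= K.+1 * L)%N ->
  exists (c : nat -> R) (M : {poly R}),
    (size M <= K * L)%N /\ N = \sum_(j < L) c j *: gnum L j K + M * D.
Proof.
(* Since gnum L j K = K! L^K x^j modulo D, the remainder of N modulo D is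
   cancelled by a combination of the gnum L j K. *)
move=> size_N; set cK : R := (K`! * L ^ K)%:R.
have cK_neq0 : cK != 0 by rewrite pnatr_eq0 -lt0n muln_gt0 fact_gt0 expn_gt0 L_gt0.
set r := N %% D; pose c j := r`_j / cK.
set S := \sum_(j < L) c j *: gnum L j K.
have r_expand : r = \sum_(j < L) (c j * cK) *: 'X^j.
  have size_r : (size r <= L)%N.
    by rewrite -ltnS -(size_onemXn R L_gt0) ltn_modpN0 ?onemXn_neq0.
  rewrite -(take_poly_id size_r) /take_poly poly_def.
  by apply: eq_bigr => j _; rewrite divfK.
have D_dvd : D %| N - S.
  set T := \sum_(j < L) c j *: (gnum L j K - cK *: 'X^j).
  have -> : S = T + r.
    by rewrite r_expand -big_split /=; apply: eq_bigr => j _; rewrite scalerBr scalerA subrK.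
  have -> : N - (T + r) = N %/ D * D - T by rewrite {1}(divp_eq N D) -/r; ring.
  rewrite dvdp_sub ?dvdp_mull //; apply: (big_ind (fun p => D %| p)) => [|p q|j _].
  - exact: dvdp0.
  - exact: dvdp_add.
  - by rewrite -mul_polyC dvdp_mull // scaler_nat -mulr_natl gnum_mod.
exists c, ((N - S) %/ D); split; last by rewrite divpK // addrC subrK.
rewrite size_divp ?onemXn_neq0 // (size_onemXn R L_gt0) leq_subLR -mulSn.
rewrite (leq_trans (size_polyD _ _)) // geq_max size_N size_polyN.
apply: leq_trans (size_sum _ _ _) _; apply/bigmax_leqP => j _.
by rewrite (leq_trans (size_scale_leq _ _)) ?size_gnum.
Qed.

Lemma ratf_span K (N : {poly R}) : (size N <= K * L)%N ->
  exists c : nat -> nat -> R, ratf N (D ^+ K) =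
    \sum_(k < K) \sum_(j < L) ratc (c k j) * ratf (G k j).1 (G k j).2.
Proof.
elim: K N => [|K IH] N size_N.
  exists (fun _ _ => 0); move: size_N; rewrite mul0n leqn0 size_poly_eq0 => /eqP ->.
  by rewrite big_ord0 /ratf tofrac0 mul0r.
have [c0 [M [size_M ->]]] := gnum_reduction size_N.
have [c ratf_M] := IH M size_M.
exists (fun k j => if k == K then c0 j else c k j).
rewrite big_ord_recr /= eqxx ratfD ratf_suml exprSr ratf_mul2r ?onemXn_neq0 //.
rewrite ratf_M addrC.
congr (_ + _); apply: eq_bigr => i _; first by rewrite ratfZ ratf_gfun exprSr.
by rewrite ltn_eqF.
Qed.

End Span.

Lemma common_multiple_exists (T : eqType) (s : seq T) (ord : T -> nat -> Prop) :
  (forall x, x \in s -> exists2 n, (0 < n)%N & ord x n) ->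
  exists2 m, (0 < m)%N & forall x, x \in s -> exists n, ord x n /\ (n %| m)%N.
Proof.
elim: s => [|x s IH] ord_s; first by exists 1%N => // x; rewrite in_nil.
have [n n_gt0 ord_x] := ord_s x (mem_head x s).
have [m m_gt0 ord_m] : exists2 m, (0 < m)%N & forall y, y \in s ->
    exists n, ord y n /\ (n %| m)%N.
  by apply: IH => y y_s; apply: ord_s; rewrite in_cons y_s orbT.
exists (n * m)%N => [|y]; first by rewrite muln_gt0 n_gt0.
rewrite in_cons => /predU1P [-> | /ord_m [n' [ord_y dvd_n'm]]].
  by exists n; rewrite dvdn_mulr.
by exists n'; rewrite dvdn_mull.
Qed.

Lemma prod_XsubC_dvdp_exp (F : idomainType) (rs : seq F) (P : {poly F}) :
  (forall z, z \in rs -> root P z) -> \prod_(z <- rs) ('X - z%:P) %| P ^+ size rs.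
Proof.
elim: rs => [|x rs IH] roots_P; first by rewrite big_nil dvd1p.
rewrite big_cons exprS dvdp_mul ?dvdp_XsubCl ?roots_P ?mem_head //.
by apply: IH => z z_rs; apply: roots_P; rewrite in_cons z_rs orbT.
Qed.

Section ReducedForm.
Variable R : rcfType.
Implicit Types (A B Q E : {poly R}) (z : R[i]).

Lemma reduced_den_neq0 A B : B != 0 -> B %/ gcdp A B != 0.
Proof.
by move=> B_neq0; apply: contra_neq B_neq0 => B'0; rewrite -(divpK (dvdp_gcdr A B)) B'0 mul0r.
Qed.

Lemma poles_finite A B : B != 0 ->
  exists rs : seq R[i], forall z, is_pole A B z <-> z \in rs.
Proof.
move=> B_neq0; have B'_neq0 := reduced_den_neq0 A B_neq0.
have [rs def_B'] := closed_field_poly_normal (cpoly (B %/ gcdp A B)); exists rs => z.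
by rewrite /is_pole def_B' rootZ ?lead_coef_eq0 ?cpoly_eq0 // root_prod_XsubC.
Qed.

Lemma is_level_gt0 A B L : B != 0 -> is_level A B L -> (0 < L)%N.
Proof.
move=> B_neq0 [poles_L least_L]; have [rs poles_rs] := poles_finite A B_neq0.
have [|m m_gt0 ord_m] := @common_multiple_exists _ rs (fun z n => n.-primitive_root z).
  move=> z /poles_rs /poles_L [n [prim_n _]].
  by exists n => //; exact: prim_order_gt0 prim_n.
by apply: dvdn_gt0 m_gt0 _; apply: least_L => z /poles_rs /ord_m.
Qed.

Lemma is_level_pole_exp A B L z : is_level A B L -> is_pole A B z -> z ^+ L = 1.
Proof.
case=> poles_L _ /poles_L [n [prim_n dvd_nL]].
by apply/eqP; rewrite -(prim_order_dvd prim_n).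
Qed.

Lemma dvdp_onemXn_exp Q L : Q != 0 ->
  (forall z, root (cpoly Q) z -> z ^+ L = 1) -> Q %| onemXn L ^+ (size Q).-1.
Proof.
move=> Q_neq0 roots_Q; rewrite -(dvdp_map (real_complex R)) -/(cpoly _) -/(cpoly _).
have [rs def_Q] := closed_field_poly_normal (cpoly Q).
have size_rs : size rs = (size Q).-1.
  rewrite -(size_map_poly (real_complex R)) -/(cpoly _) def_Q.
  by rewrite size_scale ?lead_coef_eq0 ?cpoly_eq0 // size_prod_XsubC.
rewrite def_Q dvdpZl ?lead_coef_eq0 ?cpoly_eq0 // -size_rs cpolyXn cpoly_onemXn.
apply: prod_XsubC_dvdp_exp => z z_rs; rewrite rootE !hornerE roots_Q ?subrr //.
by rewrite def_Q rootZ ?lead_coef_eq0 ?cpoly_eq0 // root_prod_XsubC.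
Qed.

Lemma ratf_reduced A B : B != 0 ->
  ratf A B = ratf (A %/ gcdp A B) (B %/ gcdp A B).
Proof.
move=> B_neq0; apply: ratf_cross (reduced_den_neq0 A B_neq0) _ => //.
set g := gcdp A B.
have def_A : A %/ g * g = A by rewrite divpK ?dvdp_gcdl.
have def_B : B %/ g * g = B by rewrite divpK ?dvdp_gcdr.
by rewrite -{1}def_A -{2}def_B; ring.
Qed.

Lemma size_reduced_lt A B : B != 0 -> (size A < size B)%N ->
  (size (A %/ gcdp A B)%R < size (B %/ gcdp A B)%R)%N.
Proof.
move=> B_neq0 lt_AB; have g_neq0 : gcdp A B != 0 by rewrite gcdp_eq0 negb_and B_neq0 orbT.
have le_gB := dvdp_leq B_neq0 (dvdp_gcdr A B).
have := size_poly_gt0 (gcdp A B); rewrite g_neq0 !size_divp //.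
by move: (size A) (size B) (size (gcdp A B)) lt_AB le_gB => *; lia.
Qed.

Lemma ratf_expand_den A Q E : (size A < size Q)%N -> Q %| E -> E != 0 ->
  exists2 N : {poly R}, (size N < size E)%N & ratf A Q = ratf N E.
Proof.
move=> lt_AQ dvd_QE E_neq0; set E' := E %/ Q.
have def_E : E' * Q = E by rewrite divpK.
have Q_neq0 : Q != 0 by apply: contra_neq E_neq0 => Q0; rewrite -def_E Q0 mulr0.
have E'_neq0 : E' != 0 by apply: contra_neq E_neq0 => E'0; rewrite -def_E E'0 mul0r.
exists (A * E'); last by apply: ratf_cross => //; rewrite -def_E; ring.
have [-> | A_neq0] := eqVneq A 0; first by rewrite mul0r size_poly0 size_poly_gt0.
have := size_poly_gt0 E'; rewrite E'_neq0 -def_E !size_mul //.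
by move: (size A) (size Q) (size E') lt_AQ => *; lia.
Qed.

End ReducedForm.

Unset Implicit Arguments.

Theorem mainTheorem8 (R : rcfType) (A B : {poly R}) (L : nat) :
  B.[0] != 0 -> (size A < size B)%N ->
  (forall z : R[i], is_pole A B z -> exists n : nat, n.-primitive_root z) ->
  is_level A B L ->
  (exists (K : nat) (c : nat -> nat -> R),
     ratf A B = \sum_(k < K) \sum_(j < L)
                  ratc (c k j) * ratf (gfun R L k j).1 (gfun R L k j).2) /\
  (forall k j : nat, (j < L)%N ->
     Up_eigenfunction L.+1 (gfun R L k j).1 (gfun R L k j).2 /\
     is_level (gfun R L k j).1 (gfun R L k j).2 L).
Proof.
(* The third hypothesis is implied by is_level A B L. *)
move=> B0_neq0 lt_AB _ level_L.
have B_neq0 : B != 0 by apply: contra_neq B0_neq0 => ->; rewrite horner0.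
have L_gt0 := is_level_gt0 B_neq0 level_L.
split=> [|k j j_lt_L]; last by split; [exact: gfun_Up_eigenfunction | exact: gfun_level].
rewrite ratf_reduced //; set K := (size (B %/ gcdp A B)).-1.
have dvd_den : B %/ gcdp A B %| onemXn L ^+ K.
  apply: dvdp_onemXn_exp (reduced_den_neq0 A B_neq0) _ => z.
  exact: is_level_pole_exp level_L.
have [N size_N ->] := ratf_expand_den (size_reduced_lt B_neq0 lt_AB) dvd_den
  (expf_neq0 K (onemXn_neq0 R L_gt0)).
rewrite (size_onemXn_exp R L_gt0) ltnS in size_N.
by have [c ->] := ratf_span L_gt0 size_N; exists K, c.
Qed.
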